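(* Let $\alpha\in(0,1)$, $\gamma,\beta>0$, $r_0>0$, $Y=B(0,r_0)\subset\mathbb R\oplus\mathbb R^{d-1}$, $\mathcal X(x)=\|x\|^\alpha Ax$ with $A=\gamma\,\mathrm{Id}_{\mathbb R}\oplus(-\beta\,\mathrm{Id}_{\mathbb R^{d-1}})$. Let $x\colon[0,T_0]\to Y$ be a trajectory of $\mathcal X$ that leaves $Y$ at time $T_0$, $\theta(t)$ the angle between $x(t)$ and $\mathbb R\times\{0\}$, and $s\in(0,\infty)$ with $\tan\theta(0)>s>\tan\theta(T_0)$; let $T_s$ be the time with $\tan\theta(T_s)=s$. Then $\int_{T_s}^{T_0}\|x\|^\alpha\tan\theta\,dt\le\frac{s}{\gamma+\beta}$. *)

From HB Require Import structures.
From mathcomp Require Import all_boot all_order all_algebra.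
From mathcomp Require Import all_classical all_reals all_analysis.
Set Implicit Arguments. Unset Strict Implicit. Unset Printing Implicit Defensive.
Import Order.TTheory GRing.Theory Num.Theory.
Import numFieldNormedType.Exports.
Local Open Scope ring_scope.

(* Points of R (+) R^(d-1) with d = n.+1 are row vectors 'rV[R]_(n.+1);
   coordinate ord0 is the R-factor, the other coordinates the R^(d-1) factor. *)

Definition enorm (R : realType) (n : nat) (x : 'rV[R]_n) : R :=
  Num.sqrt (\sum_(i < n) x ord0 i ^+ 2).

Definition Amx (R : realType) (n : nat) (gamma beta : R) : 'M[R]_(n.+1) :=
  \matrix_(i, j) (if i == j then (if i == ord0 then gamma else - beta) else 0).

(* The vector field X(x) = ||x||^alpha A x  (row-vector convention: x *m A^T = x *m A,
   A symmetric). *)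
Definition Xfield (R : realType) (n : nat) (alpha gamma beta : R)
  (x : 'rV[R]_(n.+1)) : 'rV[R]_(n.+1) :=
  (enorm x `^ alpha) *: (x *m Amx n gamma beta).

Definition angle_to_axis (R : realType) (n : nat) (x : 'rV[R]_(n.+1)) : R :=
  acos (`|x ord0 ord0| / enorm x).

From HB Require Import structures.
From mathcomp Require Import all_boot all_order all_algebra.
From mathcomp Require Import all_classical all_reals all_analysis.
From mathcomp Require Import ring lra.
Set Implicit Arguments. Unset Strict Implicit. Unset Printing Implicit Defensive.
Import Order.TTheory GRing.Theory Num.Theory.
Import numFieldNormedType.Exports.
Local Open Scope classical_set_scope.
Local Open Scope ring_scope.

(* Write [u] for the axial coordinate of [x], [V] for the squared norm of its
   transverse part and [p = |x|^alpha].  Along the flow [(u^2)' = 2 gamma p u^2]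
   and [V' = -2 beta p V], so [u^2] never decreases and, since [p <= r0^alpha]
   inside [Y], [V] stays positive (Gronwall).  Hence [tan theta = sqrt (V / u^2)]
   is differentiable with [(tan theta)' = -(gamma + beta) p tan theta], and the
   fundamental theorem of calculus gives
   [int_{T_s}^{T_0} p tan theta = (s - tan theta (T_0)) / (gamma + beta)]. *)

Section real_calculus.
Context {R : realType}.
Implicit Types (f g F : R -> R) (a b t : R).

Lemma is_derive_mx_coord m (y : R -> 'rV[R]_m) t (dy : 'rV[R]_m) (i : 'I_m) :
  is_derive t 1 y dy -> is_derive t 1 (fun s => y s ord0 i) (dy ord0 i).
Proof.
move=> [dv <-]; split; first by move/derivable_mxP: dv; apply.
by rewrite derive_mx // mxE.
Qed.

Lemma is_derive_sqr f t df :
  is_derive t 1 f df -> is_derive t 1 (fun s => f s ^+ 2) (2 * f t * df).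
Proof.
move=> /(is_deriveX 2); rewrite exprfctE /= expr1 => fd.
by have -> : 2 * f t * df = (2%:R * f t) *: df by rewrite /GRing.scale.
Qed.

Lemma is_derive_sqrt_ratio f g t a b :
  0 < f t -> 0 < g t ->
  is_derive t 1 f (a * f t) -> is_derive t 1 g (b * g t) ->
  is_derive t 1 (fun s => Num.sqrt (f s / g s))
    ((a - b) / 2 * Num.sqrt (f t / g t)).
Proof.
move=> f0 g0 fd gd.
have ratio_gt0 : 0 < f t / g t by rewrite divr_gt0.
have := @is_derive1_comp _ Num.sqrt (fun s => f s * (g s)^-1) t _ _
  (is_derive1_sqrt ratio_gt0) (is_deriveM fd (is_deriveV (lt0r_neq0 g0) gd)).
set z := Num.sqrt _ => hd.
have z0 : 0 < z by rewrite sqrtr_gt0.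
have fz : f t = z ^+ 2 * g t.
  by rewrite sqr_sqrtr ?ltW // mulrAC -mulrA mulfV ?mulr1 // lt0r_neq0.
move: hd; congr is_derive; rewrite /GRing.scale /= fz.
by field; rewrite !lt0r_neq0.
Qed.

Lemma is_derive_continuous f t df : is_derive t 1 f df -> {for t, continuous f}.
Proof. by case=> /derivable1_diffP/differentiable_continuous. Qed.

Lemma ge0_is_derive_le_cc f (df : R -> R) a b :
  {within `[a, b], continuous f} ->
  (forall t, a < t < b -> is_derive t 1 f (df t)) ->
  (forall t, a < t < b -> 0 <= df t) ->
  forall t, a <= t <= b -> f a <= f t.
Proof.
move=> fc fd df_ge0 t /andP[aLt tLb]; have ab := le_trans aLt tLb.
apply: (ger0_derive1_le_cc _ _ fc); rewrite ?in_itv /= ?lexx ?ab ?aLt ?tLb //.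
- by move=> y; rewrite in_itv /= => /fd [].
- by move=> y; rewrite in_itv /= derive1E => yab; have [_ ->] := fd y yab; exact: df_ge0.
Qed.

(* [f t * expR (K * t)] is nondecreasing. *)
Lemma gronwall_gt0 f df K a b :
  {within `[a, b], continuous f} ->
  (forall t, a < t < b -> is_derive t 1 f (df t)) ->
  (forall t, a < t < b -> - (K * f t) <= df t) ->
  0 < f a -> forall t, a <= t <= b -> 0 < f t.
Proof.
move=> fc fd df_ge fa_gt0 t tab.
pose e s := expR (K * s).
have ed (s : R) : is_derive s 1 e (expR (K * s) * K).
  apply: (is_derive1_comp (is_derive_expR _)).
  by rewrite -[X in is_derive _ _ _ X]mulr1; apply: is_deriveZ.
have Ed (s : R) : a < s < b -> is_derive s 1 (f * e) (f s * (e s * K) + e s * df s).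
  by move=> sab; have := is_deriveM (fd s sab) (ed s).
have Ec : {within `[a, b], continuous (f * e)}.
  move=> s; apply: continuousM; first exact: fc.
  by apply: continuous_subspaceT => y; exact: is_derive_continuous (ed y).
have e_gt0 s : 0 < e s by exact: expR_gt0.
have Eat : (f * e) a <= (f * e) t.
  apply: (ge0_is_derive_le_cc Ec Ed) tab => s sab.
  have := df_ge s sab; have := e_gt0 s; nra.
have Ea_gt0 : 0 < (f * e) a by rewrite /= mulr_gt0.
by move: (lt_le_trans Ea_gt0 Eat) => /=; rewrite pmulr_lgt0.
Qed.

Lemma continuous_FTC2_is_derive f F a b : a < b ->
  {within `[a, b], continuous f} -> {within `[a, b], continuous F} ->
  (forall t, a < t < b -> is_derive t 1 F (f t)) ->
  (\int[lebesgue_measure]_(t in `[a, b]) (f t)%:E = (F b - F a)%:E)%E.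
Proof.
move=> ab fc Fc Fd; rewrite EFinB; apply: (continuous_FTC2 ab fc).
  have [_ Fa Fb] := (continuous_within_itvP _ ab).1 Fc.
  by split=> // t; rewrite in_itv /= => /Fd [].
by move=> t; rewrite in_itv /= derive1E => /Fd [_ ->].
Qed.

Lemma tan_acos_ratio a b : 0 < a -> 0 <= b ->
  tan (acos (a / Num.sqrt (a ^+ 2 + b))) = Num.sqrt (b / a ^+ 2).
Proof.
move=> a0 b0.
set N := Num.sqrt _.
have N0 : 0 < N by rewrite sqrtr_gt0 ltr_wpDr // exprn_gt0.
have NN : N ^+ 2 = a ^+ 2 + b by rewrite sqr_sqrtr // addr_ge0 ?sqr_ge0.
have aN : a <= N by rewrite -{1}(ger0_norm (ltW a0)) -sqrtr_sqr ler_wsqrtr // lerDl.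
set y := a / N.
have y0 : 0 < y by rewrite divr_gt0.
have y1 : -1 <= y <= 1.
  by rewrite ler_pdivrMr // mul1r aN andbT (le_trans _ (ltW y0)) // lerN10.
rewrite /tan sin_acos // acosK; last by rewrite in_itv.
have -> : 1 - y ^+ 2 = b / N ^+ 2.
  by rewrite /y expr_div_n NN; field; rewrite -NN expf_neq0 // lt0r_neq0.
have -> : b / a ^+ 2 = b / N ^+ 2 * y^-1 ^+ 2 by rewrite /y; field; rewrite !lt0r_neq0.
by rewrite [RHS]sqrtrM ?divr_ge0 ?exprn_ge0 ?(ltW N0) // sqrtr_sqr ger0_norm // invr_ge0 ltW.
Qed.

End real_calculus.

Section axis_coordinates.
Context {R : realType} {n : nat}.
Implicit Types (z : 'rV[R]_(n.+1)) (y : R -> 'rV[R]_(n.+1)) (t : R).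

Definition transverse_sqr z : R := \sum_(i < n.+1 | i != ord0) z ord0 i ^+ 2.

Lemma transverse_sqr_ge0 z : 0 <= transverse_sqr z.
Proof. by apply: sumr_ge0 => i _; exact: sqr_ge0. Qed.

Lemma enorm_axial z : enorm z = Num.sqrt (z ord0 ord0 ^+ 2 + transverse_sqr z).
Proof. by rewrite /enorm (bigD1 ord0). Qed.

(* On the hyperplane [z ord0 ord0 = 0] the angle is [pi/2], where [tan] takes
   the junk value [0] since [cos (pi/2) = 0] and [_ / 0 = 0]. *)
Lemma tan_angle_to_axis z : tan (angle_to_axis z) =
  if z ord0 ord0 == 0 then 0 else Num.sqrt (transverse_sqr z / z ord0 ord0 ^+ 2).
Proof.
rewrite /angle_to_axis enorm_axial; case: eqP => [->|/eqP z0].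
  by rewrite normr0 mul0r acos0 /tan cos_pihalf invr0 mulr0.
by rewrite -real_normK ?num_real // tan_acos_ratio ?normr_gt0 ?transverse_sqr_ge0.
Qed.

Lemma tan_angle_to_axis_ge0 z : 0 <= tan (angle_to_axis z).
Proof. by rewrite tan_angle_to_axis; case: ifP => // _; exact: sqrtr_ge0. Qed.

Variables alpha gamma beta : R.

Lemma Xfield_coord z i : Xfield alpha gamma beta z ord0 i =
  enorm z `^ alpha * (z ord0 i * (if i == ord0 then gamma else - beta)).
Proof.
rewrite /Xfield !mxE (bigD1 i) //= big1 ?addr0; first by rewrite !mxE eqxx.
by move=> j ji; rewrite !mxE (negbTE ji) mulr0.
Qed.

Lemma is_derive_axial_sqr y t :
  is_derive t 1 y (Xfield alpha gamma beta (y t)) ->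
  is_derive t 1 (fun s => y s ord0 ord0 ^+ 2)
    (2 * gamma * enorm (y t) `^ alpha * y t ord0 ord0 ^+ 2).
Proof.
move=> /(is_derive_mx_coord ord0)/is_derive_sqr; rewrite Xfield_coord eqxx.
by congr is_derive; ring.
Qed.

Lemma is_derive_transverse_sqr y t :
  is_derive t 1 y (Xfield alpha gamma beta (y t)) ->
  is_derive t 1 (fun s => transverse_sqr (y s))
    (- (2 * beta * enorm (y t) `^ alpha) * transverse_sqr (y t)).
Proof.
move=> yd.
have -> : (fun s => transverse_sqr (y s)) =
    \sum_(i < n.+1) (fun s => if i != ord0 then y s ord0 i ^+ 2 else 0).
  by apply/funext => s; rewrite fct_sumE /transverse_sqr big_mkcond.
have -> : - (2 * beta * enorm (y t) `^ alpha) * transverse_sqr (y t) =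
    \sum_(i < n.+1) (if i != ord0
      then 2 * y t ord0 i * Xfield alpha gamma beta (y t) ord0 i else 0).
  rewrite /transverse_sqr big_mkcond mulr_sumr; apply: eq_bigr => i _.
  by case: ifPn => i0; rewrite ?mulr0 // Xfield_coord (negbTE i0); ring.
apply: is_derive_sum => i; case: ifPn => _; last exact: is_derive_cst.
exact: is_derive_sqr (is_derive_mx_coord i yd).
Qed.

End axis_coordinates.

Section trajectory.
Variables (R : realType) (n : nat) (alpha gamma beta r0 T0 : R).
Variable x : R -> 'rV[R]_(n.+1).
Hypotheses (alpha_ge0 : 0 <= alpha) (gamma_gt0 : 0 < gamma) (beta_gt0 : 0 < beta).
Hypothesis x_cont : {within `[0, T0], continuous x}.
Hypothesis x_deriv :
  forall t, 0 < t < T0 -> is_derive t 1 x (Xfield alpha gamma beta (x t)).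
Hypothesis x_in : forall t, 0 <= t < T0 -> enorm (x t) < r0.
Hypotheses (axial0_neq0 : x 0 ord0 ord0 != 0) (transverse0_gt0 : 0 < transverse_sqr (x 0)).

Local Notation q t := (x t ord0 ord0 ^+ 2).
Local Notation V t := (transverse_sqr (x t)).
Local Notation p t := (enorm (x t) `^ alpha).
Local Notation w t := (Num.sqrt (V t / q t)).

Lemma coord_continuous_within i :
  {within `[0, T0], continuous (fun t => x t ord0 i)}.
Proof.
move=> t.
exact: (continuous_comp (@x_cont t) (@coord_continuous R 1 n.+1 ord0 i (x t))).
Qed.

Lemma axial_sqr_continuous : {within `[0, T0], continuous (fun t => q t)}.
Proof. by move=> t; apply: continuousM; exact: coord_continuous_within. Qed.

Lemma transverse_sqr_continuous : {within `[0, T0], continuous (fun t => V t)}.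
Proof.
have := @continuous_big R _ +%R 0 (fun i => i != ord0) add_continuous
  (subspace `[0, T0]) (index_enum _) (fun i t => x t ord0 i ^+ 2).
apply=> i _ t; apply: continuousM; exact: coord_continuous_within.
Qed.

Lemma axial_sqr_gt0 t : 0 <= t <= T0 -> 0 < q t.
Proof.
move=> tT; have q0_gt0 : 0 < q 0 by rewrite lt0r sqrf_eq0 axial0_neq0 sqr_ge0.
apply: (lt_le_trans q0_gt0); apply: (ge0_is_derive_le_cc axial_sqr_continuous) tT.
  by move=> s sT; exact: is_derive_axial_sqr (x_deriv sT).
move=> s _ /=; apply/mulr_ge0/sqr_ge0; apply/mulr_ge0/powR_ge0.
by rewrite mulr_ge0 // ltW.
Qed.

Lemma tan_angle_to_axis_trajectory t : 0 <= t <= T0 -> tan (angle_to_axis (x t)) = w t.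
Proof.
move/axial_sqr_gt0; rewrite tan_angle_to_axis lt0r sqrf_eq0.
by case/andP=> /negbTE ->.
Qed.

Lemma norm_pow_le t : 0 < t < T0 -> p t <= r0 `^ alpha.
Proof.
move=> /andP[/ltW t_ge0 tT].
have xr0 : enorm (x t) <= r0 by apply/ltW/x_in; rewrite t_ge0 tT.
have x_ge0 : 0 <= enorm (x t) by exact: sqrtr_ge0.
by apply: ge0_ler_powR; rewrite ?nnegrE // (le_trans x_ge0).
Qed.

Lemma transverse_sqr_gt0 t : 0 <= t <= T0 -> 0 < V t.
Proof.
apply: (gronwall_gt0 (K := 2 * beta * r0 `^ alpha) transverse_sqr_continuous) => //.
  by move=> s sT; exact: is_derive_transverse_sqr (x_deriv sT).
move=> s sT /=; rewrite mulNr lerN2 ler_wpM2r ?transverse_sqr_ge0 //.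
by rewrite ler_wpM2l ?norm_pow_le // pmulr_rge0 // ltW.
Qed.

Lemma tan_ratio_continuous : {within `[0, T0], continuous (fun t => w t)}.
Proof.
rewrite continuous_subspace_in => t /set_mem tT.
apply: (continuous_comp (f := from_subspace _ (fun t => V t / q t)) (g := Num.sqrt)).
  apply: continuousM; first exact: transverse_sqr_continuous.
  by apply: continuousV; [rewrite lt0r_neq0 ?axial_sqr_gt0 | exact: axial_sqr_continuous].
exact: sqrt_continuous.
Qed.

Lemma norm_pow_continuous : {within `[0, T0], continuous (fun t => p t)}.
Proof.
have -> : (fun t => p t) = fun t => Num.sqrt (q t + V t) `^ alpha.
  by apply/funext => t; rewrite enorm_axial.
rewrite continuous_subspace_in => t /set_mem tT.
apply: (continuous_comp (f := from_subspace _ (fun t => Num.sqrt (q t + V t)))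
  (g := fun y => y `^ alpha)).
  apply: (continuous_comp (g := Num.sqrt)); last exact: sqrt_continuous.
  by apply: continuousD; [exact: axial_sqr_continuous | exact: transverse_sqr_continuous].
apply/is_derive_continuous/is_derive1_powR.
by rewrite sqrtr_gt0 addr_gt0 ?axial_sqr_gt0 ?transverse_sqr_gt0.
Qed.

Lemma is_derive_tan_ratio t : 0 < t < T0 ->
  is_derive t 1 (fun s => w s) (- ((gamma + beta) * p t * w t)).
Proof.
move=> tT; have tT' : 0 <= t <= T0 by case/andP: tT => /ltW -> /ltW.
have := is_derive_sqrt_ratio (f := fun s => V s) (g := fun s => q s)
  (transverse_sqr_gt0 tT') (axial_sqr_gt0 tT')
  (is_derive_transverse_sqr (x_deriv tT)) (is_derive_axial_sqr (x_deriv tT)).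
by congr is_derive; field.
Qed.

Lemma integral_norm_pow_tan a b : 0 <= a -> a < b -> b <= T0 ->
  (\int[lebesgue_measure]_(t in `[a, b]) (p t * tan (angle_to_axis (x t)))%:E
   = ((tan (angle_to_axis (x a)) - tan (angle_to_axis (x b))) / (gamma + beta))%:E)%E.
Proof.
move=> a_ge0 ab bT0.
have c_neq0 : gamma + beta != 0 by rewrite lt0r_neq0 // addr_gt0.
have in0T t : a <= t <= b -> 0 <= t <= T0.
  by case/andP=> aLt tLb; rewrite (le_trans a_ge0 aLt) (le_trans tLb bT0).
have sub : `[a, b] `<=` `[0, T0] by move=> t; rewrite /= !in_itv /=; exact: in0T.
have -> : (\int[lebesgue_measure]_(t in `[a, b]) (p t * tan (angle_to_axis (x t)))%:E
    = \int[lebesgue_measure]_(t in `[a, b]) (p t * w t)%:E)%E.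
  apply: eq_integral => t; rewrite inE /= in_itv /= => /in0T.
  by move/tan_angle_to_axis_trajectory ->.
apply: eq_trans (continuous_FTC2_is_derive (f := fun t => p t * w t)
  (F := fun t => - (gamma + beta)^-1 * w t) ab _ _ _) _.
- apply: (continuous_subspaceW sub) => t.
  exact: continuousM (@norm_pow_continuous t) (@tan_ratio_continuous t).
- apply: (continuous_subspaceW sub) => t.
  exact: continuousM (@cst_continuous _ _ _ t) (@tan_ratio_continuous t).
- move=> t /andP[aLt tLb].
  have tT : 0 < t < T0 by rewrite (le_lt_trans a_ge0 aLt) (lt_le_trans tLb bT0).
  have := is_deriveZ (- (gamma + beta)^-1) (is_derive_tan_ratio tT).
  by congr is_derive; rewrite /GRing.scale /=; field.
rewrite !tan_angle_to_axis_trajectory ?in0T ?lexx ?(ltW ab) //.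
by congr EFin; field.
Qed.

End trajectory.

Theorem lemma7p4 (R : realType) (n : nat) (alpha gamma beta r0 T0 s Ts : R)
  (x : R -> 'rV[R]_(n.+1)) :
  0 < alpha < 1 -> 0 < gamma -> 0 < beta -> 0 < r0 -> 0 < T0 ->
  {within `[0, T0], continuous x} ->
  (forall t, 0 < t < T0 -> is_derive t 1 x (Xfield alpha gamma beta (x t))) ->
  (forall t, 0 <= t < T0 -> enorm (x t) < r0) ->
  enorm (x T0) = r0 ->
  0 < s ->
  tan (angle_to_axis (x 0)) > s -> s > tan (angle_to_axis (x T0)) ->
  0 <= Ts <= T0 -> tan (angle_to_axis (x Ts)) = s ->
  (\int[lebesgue_measure]_(t in `[Ts, T0])
     ((enorm (x t) `^ alpha) * tan (angle_to_axis (x t)))%:E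
   <= (s / (gamma + beta))%:E)%E.
Proof.
move=> /andP[/ltW alpha_ge0 _] gamma_gt0 beta_gt0 _ _ xc xd xin _ s_gt0 tan0 tanT0 TsT tanTs.
have [axial0 transverse0] : x 0 ord0 ord0 != 0 /\ 0 < transverse_sqr (x 0).
  move: tan0; rewrite tan_angle_to_axis; case: eqP => [_ /(lt_trans s_gt0)|/eqP axial0 tan0].
    by rewrite ltxx.
  split=> //; rewrite lt0r transverse_sqr_ge0 andbT.
  by apply: contraTneq tan0 => ->; rewrite mul0r sqrtr0 -leNgt ltW.
have TsT0 : Ts < T0.
  rewrite lt_neqAle (andP TsT).2 andbT; apply: contraTneq tanT0 => <-.
  by rewrite tanTs ltxx.
rewrite (integral_norm_pow_tan (r0 := r0)) ?(andP TsT).1 // tanTs lee_fin.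
rewrite ler_pM2r ?invr_gt0 ?addr_gt0 //.
by rewrite gerBl tan_angle_to_axis_ge0.
Qed.
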